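(* Let $n\ge 1$ and let $G$ be a finite group of permutations of $[2n]=\{1,\dots,2n\}$ acting on the circuit $\Delta_{2n}$ (i.e. $G$ is a group of automorphisms of the cycle graph $\Delta_{2n}=(1\,2\,\dots\,2n)$). Then the number of equivalence classes of $n$-diagrams under the action of $G$ equals \[ \frac{1}{|S_n \wr S_2| \cdot |G|} \sum_{\pi \in S_n \wr S_2} \sum_{\eta \in G} \; \prod_i i^{\pi_i} \: \eta_i \: (\eta_i - 1) \: \cdots \: (\eta_i - \pi_i + 1), \] where $\pi$ has cycle type $1^{\pi_1}2^{\pi_2}\cdots(2n)^{\pi_{2n}}$ as a permutation of $[n]\times[2]$, $\eta$ has cycle type $1^{\eta_1}2^{\eta_2}\cdots(2n)^{\eta_{2n}}$ as a permutation of $[2n]$, the product is taken over all $i\in[2n]$ with $\pi_i>0$, and the product is understood to be $0$ if $\pi_i>\eta_i$ for some $i$.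
   Context: A chord diagram of order $n$ (an $n$-diagram) is a 3-regular graph on vertex set $[2n]$ containing the $2n$-circuit $\Delta_{2n}=(1\,2\,\dots\,2n)$ as a subgraph; the edges of $\Delta_{2n}$ form the circle, the remaining edges are the chords (so the chords form a perfect matching of $[2n]$). Given a group $G$ acting on $\Delta_{2n}$, two $n$-diagrams $\Gamma_1,\Gamma_2$ are equivalent if there is $g\in G$ taking the chords of $\Gamma_1$ to the chords of $\Gamma_2$. The wreath product $S_n\wr S_2$ consists of pairs $(\tau,\bar\sigma)$ with $\tau\in S_n$, $\bar\sigma=(\sigma_1,\dots,\sigma_n)\in S_2^n$, acting on $[n]\times[2]$ by $(\tau,\bar\sigma)\cdot(i,j)=(\tau(i),\sigma_i(j))$; it has order $2^n n!$. *)

From mathcomp Require Import all_boot all_order all_algebra all_fingroup.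
Set Implicit Arguments. Unset Strict Implicit. Unset Printing Implicit Defensive.

(* Points of the circle are 'I_(2n) (0-based: point k+1 of the paper is k). *)

Definition circ_adj (m : nat) (x y : 'I_m) : bool :=
  (val y == (val x).+1 %% m) || (val x == (val y).+1 %% m).

Definition circ_aut (m : nat) (g : {perm 'I_m}) : bool :=
  [forall x, forall y, circ_adj (g x) (g y) == circ_adj x y].

(* A chord set (perfect matching of the 2n points): the chords of an n-diagram. *)
Definition is_chordset (m : nat) (M : {set {set 'I_m}}) : bool :=
  partition M [set: 'I_m] && [forall B in M, #|B| == 2].

Definition chordsets (m : nat) : {set {set {set 'I_m}}} :=
  [set M | is_chordset M].

Definition act_chords (m : nat) (g : {perm 'I_m}) (M : {set {set 'I_m}}) :=
  [set (fun x => g x) @: B | B : {set 'I_m} in M].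

Definition chord_class (m : nat) (G : {set {perm 'I_m}}) (M : {set {set 'I_m}}) :=
  [set M' in chordsets m | [exists g in G, act_chords g M == M']].

Definition num_classes (m : nat) (G : {set {perm 'I_m}}) : nat :=
  #|[set chord_class G M | M in chordsets m]|.

Definition wreath (n : nat) : {set {perm ('I_n * 'I_2)}} :=
  [set p : {perm ('I_n * 'I_2)} | [exists tau : {perm 'I_n}, exists s : {ffun 'I_n -> {perm 'I_2}},
             [forall x, p x == (tau x.1, s x.1 x.2)]]].

Definition cyc (T : finType) (s : {perm T}) (i : nat) : nat :=
  #|[set C in porbits s | #|C| == i]|.

From mathcomp Require Import all_boot all_order all_algebra all_fingroup.
Set Implicit Arguments. Unset Strict Implicit. Unset Printing Implicit Defensive.

(* By Burnside's lemma, #|G| times the number of classes is the number of pairs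
   (g, M) with g in G fixing the diagram M.  Every diagram is the image of the
   pairs {i} x [2] under a bijection f : [n] x [2] -> [2n], its labellings form
   a single right orbit of S_n wr S_2 acting freely, and g fixes the diagram of f
   iff g f = f pi for some (then unique) pi in the wreath product.  So
   #|S_n wr S_2| times the number of diagrams fixed by g counts the pairs (pi, f)
   of a wreath element and a bijection with f pi = g f.  For fixed pi and g, such
   an f maps the i-cycles of pi injectively to i-cycles of g, with i choices of
   where to send a base point of each cycle: this is the product
   prod_i i^pi_i eta_i (eta_i - 1) ... (eta_i - pi_i + 1), obtained by adding
   the cycles of pi one at a time to the domain of a partial intertwining
   injection. *)

Section PermCycles.
Variables (T : finType) (p : {perm T}).
Implicit Types (S : {set T}) (x z w : T).

Lemma iter_stable S a z : p @: S \subset S -> z \in S -> iter a p z \in S.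
Proof.
by move=> /subsetP pS zS; elim: a => //= a IH; apply: pS; apply: imset_f.
Qed.

Lemma porbit_sub S z : p @: S \subset S -> z \in S -> porbit p z \subset S.
Proof.
by move=> pS zS; apply/subsetP=> w /porbitP[i ->]; rewrite permX iter_stable.
Qed.

Lemma porbit_disjoint x z :
  porbit p x != porbit p z -> [disjoint porbit p x & porbit p z].
Proof.
move=> neq; apply/pred0P=> w /=; apply/andP=> -[wx wz]; move: neq.
by rewrite -eq_porbit_mem in wx; rewrite -eq_porbit_mem in wz; rewrite -(eqP wx) wz.
Qed.

Lemma card_porbit_gt0 z : 0 < #|porbit p z|.
Proof. by rewrite lt0n card_porbit_neq0. Qed.

Lemma iter_porbit_mod a z : iter a p z = iter (a %% #|porbit p z|) p z.
Proof.
rewrite {1}(divn_eq a #|porbit p z|) addnC iterD; congr iter.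
by elim: (a %/ _) => // b IH; rewrite mulSn iterD IH iter_porbit.
Qed.

Lemma iter_porbit_inj z i j : i < #|porbit p z| -> j < #|porbit p z| ->
  iter i p z = iter j p z -> i = j.
Proof.
move=> ilt jlt eq_ij; apply/eqP.
rewrite -(nth_uniq z _ _ (uniq_traject_porbit p z)) ?size_traject //.
by rewrite !nth_traject // eq_ij.
Qed.

Definition porbit_index z w := index w (traject p z #|porbit p z|).

Lemma porbit_index_lt z w : w \in porbit p z -> porbit_index z w < #|porbit p z|.
Proof. by rewrite porbit_traject -index_mem size_traject. Qed.

Lemma iter_porbit_index z w : w \in porbit p z -> iter (porbit_index z w) p z = w.
Proof.
move=> wz; rewrite -(nth_traject p (porbit_index_lt wz)) nth_index //.
by rewrite -porbit_traject.
Qed.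

Lemma perm_in_porbit x w : (p w \in porbit p x) = (w \in porbit p x).
Proof. by rewrite -!eq_porbit_mem; have := porbit_perm p 1 w; rewrite expg1 => ->. Qed.

Lemma setD_porbit_stable S x :
  p @: S \subset S -> p @: (S :\: porbit p x) \subset S :\: porbit p x.
Proof.
move=> /subsetP pS; apply/subsetP=> _ /imsetP[w /setDP[wS wx] ->].
by rewrite inE perm_in_porbit wx pS ?imset_f.
Qed.

Definition ncycles_in S i :=
  #|[set C in porbits p | (C \subset S) && (#|C| == i)]|.

Lemma ncycles_in_setT i : ncycles_in [set: T] i = cyc p i.
Proof. by apply: eq_card => C; rewrite !inE subsetT. Qed.

Lemma ncycles_in_set0 i : ncycles_in set0 i = 0.
Proof.
apply: eq_card0 => C; rewrite !inE; apply/andP=> -[/imsetP[z _ ->]].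
by rewrite subset0 => /andP[/eqP orbit0 _]; move: (porbit_id p z); rewrite orbit0 inE.
Qed.

Lemma card_points_porbit_eq S k : p @: S \subset S ->
  #|[set z in S | #|porbit p z| == k]| = ncycles_in S k * k.
Proof.
move=> pS; apply: card_uniform_partition.
  by move=> C; rewrite inE => /and3P[_ _ /eqP].
apply/and3P; split.
- apply/eqP/setP=> z; apply/bigcupP/idP.
    case=> C /setIdP[/imsetP[w _ ->] /andP[wS /eqP wk]] zw.
    rewrite inE (subsetP wS) //=.
    by move: zw; rewrite -eq_porbit_mem => /eqP ->; rewrite wk.
  case/setIdP=> zS zk; exists (porbit p z); last exact: porbit_id.
  by rewrite inE imset_f //= zk porbit_sub.
- apply/trivIsetP=> _ _ /setIdP[/imsetP[x _ ->] _] /setIdP[/imsetP[z _ ->] _].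
  exact: porbit_disjoint.
- apply/negP=> /setIdP[/imsetP[z _ orbit0] _].
  by move: (porbit_id p z); rewrite -orbit0 inE.
Qed.

Lemma ncycles_in_setD_porbit S x i : p @: S \subset S -> x \in S ->
  ncycles_in S i = (#|porbit p x| == i) + ncycles_in (S :\: porbit p x) i.
Proof.
move=> pS xS; set C := porbit p x.
have C_orbit : C \in porbits p by apply: imset_f.
have sub_setD D : D \in porbits p ->
    (D \subset S :\: C) = (D \subset S) && (D != C).
  case/imsetP=> z _ ->; rewrite subsetD; case: eqVneq => [->|neq].
    rewrite /= andbF; apply/negP=> /andP[_ /disjointFr/(_ (porbit_id p x))].
    by rewrite porbit_id.
  by rewrite porbit_disjoint.
rewrite /ncycles_in (cardsD1 C) !inE C_orbit porbit_sub //=; congr (_ + _).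
apply: eq_card => D; rewrite !inE; case: (boolP (D \in porbits p)) => [Dp|] /=.
  by rewrite (sub_setD D Dp); case: (D != C); rewrite ?andbT ?andbF.
by rewrite andbF.
Qed.

End PermCycles.

Section EquivariantInjections.
Variables (T U : finType) (p : {perm T}) (q : {perm U}).
Implicit Types (S A : {set T}) (f : {ffun T -> option U}).

Definition eqv_pinj S := [set f : {ffun T -> option U} |
  [&& [forall z, (z \in S) == (f z != None)],
      [forall z in S, forall w in S, (f z == f w) ==> (z == w)] &
      [forall z in S, f (p z) == omap q (f z)]]].

Lemma eqv_pinjP S f : reflect
  [/\ forall z, (z \in S) = (f z != None), {in S &, injective f} &
      {in S, forall z, f (p z) = omap q (f z)}]
  (f \in eqv_pinj S).
Proof.
rewrite inE; apply: (iffP and3P) => [[/forallP dom /forall_inP inj /forall_inP eqv]|].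
  split=> [z | z w zS wS fzw | z zS]; first exact/eqP/dom.
    by move/forall_inP: (inj z zS) => /(_ w wS); rewrite fzw eqxx => /eqP.
  exact/eqP/eqv.
case=> dom inj eqv; split.
- by apply/forallP=> z; rewrite dom.
- apply/forall_inP=> z zS; apply/forall_inP=> w wS.
  by apply/implyP=> /eqP fzw; rewrite (inj z w).
- by apply/forall_inP=> z zS; rewrite eqv.
Qed.

Lemma eqv_pinj_iter S f a z : p @: S \subset S -> f \in eqv_pinj S -> z \in S ->
  f (iter a p z) = omap (iter a q) (f z).
Proof.
move=> pS /eqv_pinjP[_ _ eqv] zS; elim: a => [|a IH] /=; first by case: (f z).
by rewrite eqv ?iter_stable // IH; case: (f z).
Qed.

Lemma eqv_pinj_card_porbit S f z y : p @: S \subset S -> f \in eqv_pinj S ->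
  z \in S -> f z = Some y -> #|porbit q y| = #|porbit p z|.
Proof.
move=> pS fS zS fz; have [dom inj _] := eqv_pinjP _ _ fS.
have zorbS := subsetP (porbit_sub pS zS).
pose g w := odflt y (f w).
have gE w : w \in S -> f w = Some (g w) by rewrite dom /g; case: (f w).
have -> : porbit q y = g @: porbit p z.
  apply/setP=> y'; apply/porbitP/imsetP => [[i ->]|[w /porbitP[i ->] ->]].
    exists (iter i p z); first by rewrite -permX mem_porbit.
    by rewrite /g (eqv_pinj_iter _ pS fS zS) fz /= permX.
  by exists i; rewrite /g !permX (eqv_pinj_iter _ pS fS zS) fz.
apply: card_in_imset => w1 w2 w1z w2z g12.
by apply: inj; rewrite ?zorbS // !gE ?zorbS // g12.
Qed.

Lemma card_eqv_pinj_set0 : #|eqv_pinj set0| = 1.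
Proof.
apply/eqP/cards1P; exists [ffun=> None]; apply/setP=> f; rewrite in_set1.
apply/idP/eqP => [/eqv_pinjP[dom _ _]|->].
  by apply/ffunP=> z; rewrite ffunE; move: (dom z); rewrite inE; case: (f z).
by apply/eqv_pinjP; split=> [z|z w|z]; rewrite ?ffunE ?inE.
Qed.

Definition restrict A f : {ffun T -> option U} :=
  [ffun z => if z \in A then f z else None].

Lemma restrict_eqv_pinj A S f : A \subset S -> p @: A \subset A ->
  f \in eqv_pinj S -> restrict A f \in eqv_pinj A.
Proof.
move=> /subsetP AS /subsetP pA /eqv_pinjP[dom inj eqv]; apply/eqv_pinjP; split.
- by move=> z; rewrite ffunE; case: ifP => // /AS; rewrite dom.
- by move=> z w zA wA; rewrite !ffunE zA wA; apply: inj; apply: AS.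
- by move=> z zA; rewrite !ffunE zA pA ?imset_f // eqv ?AS.
Qed.

Section RemoveCycle.
Variables (S : {set T}) (x : T).
Hypotheses (pS : p @: S \subset S) (xS : x \in S).
Local Notation C := (porbit p x).
Local Notation S' := (S :\: porbit p x).
Local Notation k := #|porbit p x|.

Let pS' : p @: S' \subset S'. Proof. exact: setD_porbit_stable. Qed.
Let S'S : S' \subset S. Proof. exact: subsetDl. Qed.

Definition fresh_targets f :=
  [set y | #|porbit q y| == k] :\: [set y | Some y \in f @: S'].

Definition extend f (y : U) : {ffun T -> option U} :=
  [ffun z => if z \in S' then f z
             else if z \in C then Some (iter (porbit_index p x z) q y) else None].

Section Extend.
Variables (f : {ffun T -> option U}) (y : U).
Hypotheses (fS' : f \in eqv_pinj S') (y_fresh : y \in fresh_targets f).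

Let card_porbit_y : #|porbit q y| = k.
Proof. by move: y_fresh; rewrite !inE => /andP[_ /eqP]. Qed.

Lemma extend_iter a : extend f y (iter a p x) = Some (iter a q y).
Proof.
have aC : iter a p x \in C by rewrite -permX mem_porbit.
rewrite ffunE inE aC /=; congr Some.
rewrite (iter_porbit_mod q a y) card_porbit_y; congr iter.
apply: (@iter_porbit_inj _ p x); rewrite ?porbit_index_lt ?ltn_pmod ?card_porbit_gt0 //.
by rewrite iter_porbit_index // -iter_porbit_mod.
Qed.

Lemma extend_eqv_pinj : extend f y \in eqv_pinj S.
Proof.
have [dom inj eqv] := eqv_pinjP _ _ fS'.
have ext_S' z : z \in S' -> extend f y z = f z by move=> zS'; rewrite ffunE zS'.
have in_C z : z \in S -> z \notin S' -> z \in C by rewrite inE => -> /nandP[/negbNE|].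
have ext_C z : z \in C -> extend f y z = Some (iter (porbit_index p x z) q y).
  by move=> zC; rewrite -extend_iter iter_porbit_index.
have ext_neq z w : z \in S' -> w \in C -> extend f y z != extend f y w.
  move=> zS' wC; rewrite ext_S' // ext_C //; apply/eqP=> fz.
  move: y_fresh; rewrite !inE => /andP[/negP not_img _]; apply: not_img; apply/imsetP.
  set b := porbit_index p x w; have bk : b < k by apply: porbit_index_lt.
  exists (iter (k - b) p z); first exact: iter_stable.
  by rewrite (eqv_pinj_iter _ pS' fS' zS') fz /= -iterD subnK 1?ltnW // -card_porbit_y iter_porbit.
apply/eqv_pinjP; split.
- move=> z; rewrite ffunE; case: ifP => [zS'|zS']; first by rewrite -dom (subsetP S'S).
  by case: ifP => [zC|zC]; [rewrite (subsetP (porbit_sub pS xS)) | rewrite inE zC in zS'].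
- move=> z w zS wS; case: (boolP (z \in S')) => zS'; case: (boolP (w \in S')) => wS'.
  + by rewrite !ext_S' //; apply: inj.
  + by move=> ezw; move: (ext_neq z w zS' (in_C w wS wS')); rewrite ezw eqxx.
  + by move=> ezw; move: (ext_neq w z wS' (in_C z zS zS')); rewrite ezw eqxx.
  rewrite !ext_C ?in_C // => -[/iter_porbit_inj eq_idx].
  rewrite -(iter_porbit_index (in_C z zS zS')) -(iter_porbit_index (in_C w wS wS')).
  by rewrite eq_idx // card_porbit_y porbit_index_lt ?in_C.
- move=> z zS; case: (boolP (z \in S')) => zS'.
    by rewrite !ext_S' ?eqv // (subsetP pS') ?imset_f.
  by rewrite -(iter_porbit_index (in_C z zS zS')) -iterS !extend_iter.
Qed.

Lemma restrict_extend : restrict S' (extend f y) = f.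
Proof.
have [dom _ _] := eqv_pinjP _ _ fS'.
apply/ffunP=> z; rewrite !ffunE; case: (boolP (z \in S')) => // zS'.
by move: (dom z); rewrite (negbTE zS'); case: (f z).
Qed.

End Extend.

Lemma card_extensions f : f \in eqv_pinj S' ->
  #|[set g in eqv_pinj S | restrict S' g == f]| = #|fresh_targets f|.
Proof.
move=> fS'; set E := [set g in eqv_pinj S | restrict S' g == f].
have value_x_inj : {in E &, injective (fun g : {ffun T -> option U} => g x)}.
  move=> g1 g2 /setIdP[g1S /eqP r1] /setIdP[g2S /eqP r2] /= g12; apply/ffunP=> z.
  have [dom1 _ _] := eqv_pinjP _ _ g1S; have [dom2 _ _] := eqv_pinjP _ _ g2S.
  case: (boolP (z \in C)) => zC.
    by rewrite -(iter_porbit_index zC) !(eqv_pinj_iter _ pS _ xS) // g12.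
  case: (boolP (z \in S)) => zS.
    have := congr1 (fun g : {ffun T -> option U} => g z) (etrans r1 (esym r2)).
    by rewrite /= !ffunE inE zC zS.
  by move: (dom1 z) (dom2 z); rewrite (negbTE zS); case: (g1 z); case: (g2 z).
rewrite -[RHS](card_imset _ Some_inj) -(card_in_imset value_x_inj).
apply: eq_card => o; apply/imsetP/imsetP => -[].
  move=> g /setIdP[gS /eqP rg] ->; have [dom inj _] := eqv_pinjP _ _ gS.
  case gx: (g x) => [y|]; last by move: (dom x); rewrite xS gx.
  exists y => //; rewrite !inE (eqv_pinj_card_porbit pS gS xS gx) eqxx andbT.
  apply/imsetP=> -[z zS']; rewrite -rg ffunE zS' -gx => /esym gzx.
  have zx : z = x by apply: inj => //; apply: (subsetP S'S).
  by move: zS'; rewrite zx inE porbit_id.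
move=> y y_fresh ->; exists (extend f y); last by rewrite (extend_iter y_fresh 0).
by rewrite inE extend_eqv_pinj // restrict_extend // eqxx.
Qed.

Lemma card_fresh_targets f : f \in eqv_pinj S' ->
  #|fresh_targets f| = (cyc q k - ncycles_in p S' k) * k.
Proof.
move=> fS'; have [dom inj _] := eqv_pinjP _ _ fS'.
set K := [set y | #|porbit q y| == k].
have cardK : #|K| = cyc q k * k.
  rewrite -ncycles_in_setT -card_points_porbit_eq ?subsetT //.
  by apply: eq_card => y; rewrite !inE.
have cardKI : #|K :&: [set y | Some y \in f @: S']| = ncycles_in p S' k * k.
  rewrite -card_points_porbit_eq // -[LHS](card_imset _ Some_inj).
  rewrite -(card_in_imset (f := f)); last first.
    by move=> z w /setIdP[zS' _] /setIdP[wS' _]; apply: inj.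
  apply: eq_card => o; apply/imsetP/imsetP => -[].
    move=> y /setIP[]; rewrite !inE => /eqP yk /imsetP[z zS' fz] ->.
    by exists z; rewrite // inE zS' -(eqv_pinj_card_porbit pS' fS' zS' (esym fz)) yk /=.
  move=> z /setIdP[zS' /eqP zk] ->.
  case fz: (f z) => [y|]; last by move: (dom z); rewrite zS' fz.
  exists y => //; rewrite !inE (eqv_pinj_card_porbit pS' fS' zS' fz) zk eqxx /=.
  by rewrite -fz imset_f.
by rewrite cardsD cardKI cardK mulnBl.
Qed.

Lemma card_eqv_pinj_remove_cycle :
  #|eqv_pinj S| = #|eqv_pinj S'| * ((cyc q k - ncycles_in p S' k) * k).
Proof.
rewrite -sum1_card (partition_big (restrict S') (mem (eqv_pinj S'))) /=; last first.
  by move=> g; apply: restrict_eqv_pinj.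
rewrite -sum_nat_const; apply: eq_bigr => f fS'.
rewrite -(card_fresh_targets fS') -(card_extensions fS') -sum1_card.
by apply: eq_bigl => g; rewrite inE.
Qed.

End RemoveCycle.

Lemma card_eqv_pinj N S : p @: S \subset S -> #|T| <= N ->
  #|eqv_pinj S| =
    \prod_(1 <= i < N.+1) (i ^ ncycles_in p S i * cyc q i ^_ ncycles_in p S i).
Proof.
move=> + leTN; elim: {S}_.+1 {-2}S (ltnSn #|S|) => // m IH S ltSm pS.
have [->|[x xS]] := set_0Vmem S.
  by rewrite card_eqv_pinj_set0 big1 // => i _; rewrite ncycles_in_set0.
have k_range : #|porbit p x| \in index_iota 1 N.+1.
  by rewrite mem_index_iota card_porbit_gt0 ltnS (leq_trans (max_card _)).
have ltS'm : #|S :\: porbit p x| < m.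
  rewrite -ltnS (leq_trans _ ltSm) // ltnS proper_card // properE subsetDl /=.
  by apply/subsetP=> /(_ x xS); rewrite inE porbit_id.
rewrite (card_eqv_pinj_remove_cycle pS xS) IH ?setD_porbit_stable //.
rewrite !(bigD1_seq _ k_range (iota_uniq _ _)) /=.
rewrite (ncycles_in_setD_porbit _ pS xS) eqxx add1n expnS ffactnSr.
rewrite [in RHS](eq_bigr (fun i => i ^ ncycles_in p (S :\: porbit p x) i *
    cyc q i ^_ ncycles_in p (S :\: porbit p x) i)); last first.
  by move=> i ik; rewrite (ncycles_in_setD_porbit _ pS xS) eq_sym (negbTE ik).
move: (\prod_(_ <= _ < _ | _) _) (#|porbit p x| ^ _) (cyc q _ ^_ _) (cyc q _ - _).
move: #|porbit p x| => k P K f d; rewrite mulnAC; congr (_ * _).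
by rewrite [k * K]mulnC -!mulnA; congr (_ * _); rewrite [RHS]mulnC -mulnA.
Qed.

Definition eqv_inj :=
  [set f : {ffun T -> U} | injectiveb f && [forall z, f (p z) == q (f z)]].

Lemma card_eqv_inj_pinj (u0 : U) : #|eqv_inj| = #|eqv_pinj [set: T]|.
Proof.
have Some_ffun_inj : injective (fun f : {ffun T -> U} => [ffun z => Some (f z)]).
  by move=> f g /ffunP fg; apply/ffunP=> z; move: (fg z); rewrite !ffunE => -[].
rewrite -(card_imset _ Some_ffun_inj); apply: eq_card => h; apply/imsetP/idP.
  case=> f /setIdP[/injectiveP finj /forallP feqv] ->; apply/eqv_pinjP; split.
  - by move=> z; rewrite ffunE inE.
  - by move=> z w _ _; rewrite !ffunE => -[/finj].
  - by move=> z _; rewrite !ffunE (eqP (feqv z)).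
case/eqv_pinjP=> dom inj eqv.
have hE z : h z = Some (odflt u0 (h z)) by move: (dom z); rewrite inE; case: (h z).
exists [ffun z => odflt u0 (h z)]; last by apply/ffunP=> z; rewrite !ffunE -hE.
rewrite inE; apply/andP; split.
  by apply/injectiveP=> z w; rewrite !ffunE => e; apply: inj; rewrite ?inE // hE e -hE.
apply/forallP=> z; rewrite !ffunE.
by move: (eqv z (in_setT z)); rewrite hE (hE z) => -[->].
Qed.

Lemma card_eqv_inj (u0 : U) N : #|T| <= N ->
  #|eqv_inj| =
    \prod_(1 <= i < N.+1 | 0 < cyc p i) (i ^ cyc p i * cyc q i ^_ cyc p i).
Proof.
move=> leTN; rewrite (card_eqv_inj_pinj u0) (card_eqv_pinj (subsetT _) leTN).
rewrite [RHS]big_mkcond; apply: eq_bigr => i _.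
by rewrite ncycles_in_setT; case: posnP => [->|].
Qed.

End EquivariantInjections.

Section Labellings.
Variable n : nat.
Local Notation T := ('I_n * 'I_2)%type.
Local Notation U := 'I_(2 * n).

Definition block (i : 'I_n) : {set T} := [set z : T | z.1 == i].

Definition chords_of (f : T -> U) : {set {set U}} := [set f @: block i | i : 'I_n].

Lemma card_block i : #|block i| = 2.
Proof.
have -> : block i = [set (i, j) | j : 'I_2].
  apply/setP=> -[i' j]; rewrite inE /=.
  by apply/eqP/imsetP => [->|[j' _ [-> _]]] //; exists j.
by rewrite card_imset ?cardsT ?card_ord // => j j' [].
Qed.

Lemma block_partition : partition [set block i | i : 'I_n] [set: T].
Proof.
apply/and3P; split.
- apply/eqP/setP=> z; rewrite inE; apply/bigcupP; exists (block z.1); rewrite ?inE //.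
  exact: imset_f.
- apply/trivIsetP=> _ _ /imsetP[i _ ->] /imsetP[j _ ->] neq.
  apply/pred0P=> z /=; rewrite !inE; apply/andP=> -[/eqP zi /eqP zj].
  by move: neq; rewrite -zi -zj eqxx.
- by apply/imsetP=> -[i _ /setP/(_ (i, ord0))]; rewrite !inE eqxx.
Qed.

Lemma card_labels : #|{: T}| = #|{: U}|.
Proof. by rewrite card_prod !card_ord mulnC. Qed.

Lemma labelling_bij (f : T -> U) : injective f -> bijective f.
Proof. by move=> finj; apply: inj_card_bij finj _; rewrite card_labels. Qed.

Lemma eq_chords_of (f g : T -> U) : f =1 g -> chords_of f = chords_of g.
Proof. by move=> fg; apply: eq_imset => i; apply: eq_imset. Qed.

Lemma wreath_blocks (p : {perm T}) :
  p \in wreath n -> exists tau : {perm 'I_n}, forall i, p @: block i = block (tau i).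
Proof.
rewrite inE => /existsP[tau /existsP[s /forallP pE]]; exists tau => i.
apply/setP=> w; rewrite inE; apply/imsetP/eqP => [[z]|wi].
  by rewrite inE => /eqP <- ->; rewrite (eqP (pE z)).
exists (i, (s i)^-1%g w.2); first by rewrite inE.
by rewrite (eqP (pE _)) /= permKV -wi -surjective_pairing.
Qed.

Lemma mem_wreath_of_blocks (p : {perm T}) :
  (forall z w : T, z.1 = w.1 -> (p z).1 = (p w).1) -> p \in wreath n.
Proof.
move=> p_blocks; pose tau i := (p (i, ord0)).1.
have p_block i : p @: block i = block (tau i).
  apply/eqP; rewrite eqEcard card_imset ?card_block ?leqnn ?andbT; last exact: perm_inj.
  apply/subsetP=> _ /imsetP[z zi ->].
  by rewrite !inE in zi *; rewrite (p_blocks z (i, ord0)) ?(eqP zi).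
have tau_inj : injective tau.
  move=> i j tij; have : block i = block j.
    by apply: (imset_inj (@perm_inj _ p)); rewrite !p_block tij.
  by move/setP/(_ (i, ord0)); rewrite !inE eqxx => /esym/eqP.
have sigma_inj i : injective (fun j => (p (i, j)).2).
  move=> j j' eq2; suff /perm_inj[] : p (i, j) = p (i, j') by [].
  by rewrite [LHS]surjective_pairing [RHS]surjective_pairing eq2 (p_blocks (i, j) (i, j')).
rewrite inE; apply/existsP; exists (perm tau_inj); apply/existsP.
exists [ffun i => perm (sigma_inj i)]; apply/forallP=> -[i j]; rewrite ffunE !permE /=.
by rewrite [p (i, j)]surjective_pairing (p_blocks (i, j) (i, ord0)).
Qed.

Lemma card_wreath_gt0 : 0 < #|wreath n|.
Proof. by apply/card_gt0P; exists 1%g; apply: mem_wreath_of_blocks => z w; rewrite !perm1. Qed.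

Lemma chords_of_comp_wreath (f : T -> U) (p : {perm T}) :
  p \in wreath n -> chords_of (f \o p) = chords_of f.
Proof.
case/wreath_blocks=> tau p_block; apply/setP=> B; apply/imsetP/imsetP => -[i _ ->].
  by exists (tau i); rewrite // -p_block -imset_comp.
by exists ((tau^-1)%g i); rewrite // -[in LHS](permKV tau i) -p_block -imset_comp.
Qed.

Lemma mem_wreath_of_chords (f : T -> U) (p : {perm T}) : injective f ->
  chords_of (f \o p) = chords_of f -> p \in wreath n.
Proof.
move=> finj eq_chords; apply: mem_wreath_of_blocks => z w zw.
have : (f \o p) @: block z.1 \in chords_of f by rewrite -eq_chords imset_f.
case/imsetP=> j _ eq_j.
suff p_block u : u.1 = z.1 -> (p u).1 = j by rewrite !p_block.
move=> uz; have : (f \o p) u \in (f \o p) @: block z.1 by rewrite imset_f // inE uz.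
by rewrite eq_j => /imsetP[v]; rewrite inE => /eqP vj /finj ->.
Qed.

Lemma act_chords_of (g : {perm U}) (f : T -> U) :
  act_chords g (chords_of f) = chords_of (g \o f).
Proof.
by rewrite /act_chords /chords_of -imset_comp; apply: eq_imset => i /=; rewrite -imset_comp.
Qed.

Lemma chordset_chords_of (f : T -> U) : injective f -> chords_of f \in chordsets (2 * n).
Proof.
move=> finj; rewrite inE; apply/andP; split.
  have -> : [set: U] = f @: [set: T].
    by apply/esym/eqP; rewrite eqEcard subsetT card_imset // !cardsT card_labels /=.
  have -> : chords_of f = [set f @: (B : {set T}) | B in [set block i | i : 'I_n]].
    by rewrite -imset_comp.
  by rewrite imset_partition ?block_partition.
by apply/forall_inP=> _ /imsetP[i _ ->]; rewrite card_imset ?card_block.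
Qed.

Lemma card_chordset M : M \in chordsets (2 * n) -> #|M| = n.
Proof.
rewrite inE => /andP[Mpart /forall_inP M2].
have := card_uniform_partition (fun B BM => eqP (M2 B BM)) Mpart.
by rewrite cardsT card_ord [RHS]mulnC => /eqP; rewrite eqn_pmul2l // => /eqP.
Qed.

Lemma chords_of_onto (u0 : U) M : M \in chordsets (2 * n) ->
  exists2 f : {ffun T -> U}, injective f & chords_of f = M.
Proof.
move=> Mchords; have size_enumM : size (enum M) = n by rewrite -cardE card_chordset.
move: Mchords; rewrite inE => /andP[Mpart /forall_inP M2].
pose chord (i : 'I_n) := nth set0 (enum M) i.
have chordM i : chord i \in M by rewrite -mem_enum mem_nth // size_enumM.
have chord_inj : injective chord.
  by move=> i j /eqP; rewrite nth_uniq ?enum_uniq ?size_enumM // => /eqP/val_inj.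
have size_chord i : size (enum (chord i)) = 2 by rewrite -cardE (eqP (M2 _ (chordM i))).
pose f := [ffun z : T => nth u0 (enum (chord z.1)) z.2].
have f_block i : f @: block i = chord i.
  apply/setP=> u; apply/imsetP/idP => [[z zi ->]|u_i].
    by move: zi; rewrite inE ffunE => /eqP ->; rewrite -mem_enum mem_nth ?size_chord.
  have idx_lt : index u (enum (chord i)) < 2.
    by rewrite -[X in _ < X](size_chord i) index_mem mem_enum.
  by exists (i, Ordinal idx_lt); rewrite ?inE // ffunE nth_index ?mem_enum.
have f_inj : injective f.
  move=> [i j] [i' j'] fij.
  have fi : f (i, j) \in chord i by rewrite -f_block imset_f ?inE.
  have fi' : f (i, j) \in chord i' by rewrite fij -f_block imset_f ?inE.
  have ii' : i = i'.
    apply: chord_inj; apply/eqP; apply/negPn/negP => neq.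
    have := trivIsetP (partition_trivIset Mpart) _ _ (chordM i) (chordM i') neq.
    by move/disjointFr/(_ fi); rewrite fi'.
  move: fij; rewrite -ii' !ffunE /= => /eqP.
  by rewrite nth_uniq ?size_chord ?enum_uniq // => /eqP/val_inj ->.
exists f => //; apply/setP=> B; apply/imsetP/idP => [[i _ ->]|BM]; first by rewrite f_block chordM.
have idx_lt : index B (enum M) < n.
  by rewrite -[X in _ < X]size_enumM index_mem mem_enum.
by exists (Ordinal idx_lt); rewrite // f_block /chord nth_index ?mem_enum.
Qed.

Lemma card_labellings (f0 : T -> U) : injective f0 ->
  #|[set f : {ffun T -> U} | injectiveb f && (chords_of f == chords_of f0)]| = #|wreath n|.
Proof.
move=> f0inj; have [g0 f0K g0K] := labelling_bij f0inj.
pose relabel (p : {perm T}) : {ffun T -> U} := [ffun z => f0 (p z)].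
have relabel_inj : injective relabel.
  move=> p1 p2 /ffunP eq12; apply/permP=> z; apply: f0inj.
  by move: (eq12 z); rewrite !ffunE.
rewrite -(card_imset _ relabel_inj); apply: eq_card => f; rewrite inE.
apply/andP/imsetP => [[/injectiveP finj /eqP eq_chords]|[p pW ->]].
  have pinj : injective (g0 \o f) by apply: inj_comp; [exact: can_inj g0K | exact: finj].
  have f0p : f0 \o perm pinj =1 f by move=> z; rewrite /= permE /= g0K.
  exists (perm pinj); last by apply/ffunP=> z; rewrite ffunE -f0p.
  by apply: (mem_wreath_of_chords f0inj); rewrite -eq_chords; apply: eq_chords_of.
split; first by apply/injectiveP=> a b; rewrite !ffunE => /f0inj/perm_inj.
by rewrite -(chords_of_comp_wreath f0 pW); apply/eqP/eq_chords_of => z; rewrite ffunE.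
Qed.

Lemma card_intertwining_wreath (g : {perm U}) (f : T -> U) : injective f ->
  #|[set p in wreath n | [forall z, f (p z) == g (f z)]]| =
  (act_chords g (chords_of f) == chords_of f).
Proof.
move=> finj; have [f' fK f'K] := labelling_bij finj.
have p0inj : injective (f' \o g \o f).
  by apply: inj_comp; [apply: inj_comp; [exact: can_inj f'K | exact: perm_inj] | exact: finj].
set p0 := perm p0inj.
have intertwineE (p : {perm T}) : [forall z, f (p z) == g (f z)] = (p == p0).
  apply/forallP/eqP => [fpg|-> z]; last by rewrite permE /= f'K.
  by apply/permP=> z; rewrite permE /= -(eqP (fpg z)) fK.
have -> : (act_chords g (chords_of f) == chords_of f) = (p0 \in wreath n).
  rewrite act_chords_of (eq_chords_of (g := f \o p0)) => [|z]; last by rewrite /= permE /= f'K.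
  by apply/eqP/idP => [|p0W]; [exact: mem_wreath_of_chords | exact: chords_of_comp_wreath].
case: (boolP (p0 \in wreath n)) => p0W.
  transitivity #|[set p0]|; last exact: cards1.
  apply: eq_card => p; rewrite in_set in_set1 intertwineE.
  by case: eqVneq => [->|]; rewrite ?p0W ?andbF.
apply: eq_card0 => p; rewrite in_set intertwineE.
by case: eqVneq => [->|]; rewrite ?(negbTE p0W) ?andbF.
Qed.

Lemma sum_card_eqv_inj_wreath (g : {perm U}) :
  \sum_(p in wreath n) #|eqv_inj p g| =
  \sum_(f : {ffun T -> U} | injectiveb f) (act_chords g (chords_of f) == chords_of f).
Proof.
under eq_bigr => p _ do rewrite -sum1dep_card.
rewrite (exchange_big_dep (fun f : {ffun T -> U} => injectiveb f)) /=; last first.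
  by move=> p f _ /andP[].
apply: eq_bigr => f finj; rewrite -(card_intertwining_wreath g (injectiveP _ finj)).
by rewrite -sum1_card; apply: eq_bigl => p; rewrite !inE finj.
Qed.

Lemma sum_fixed_labellings (u0 : U) (g : {perm U}) :
  \sum_(f : {ffun T -> U} | injectiveb f) (act_chords g (chords_of f) == chords_of f) =
  #|wreath n| * #|[set M in chordsets (2 * n) | act_chords g M == M]|.
Proof.
rewrite (partition_big (fun f : {ffun T -> U} => chords_of f) (mem (chordsets (2 * n)))) /=.
  rewrite -[X in #|wreath n| * X]sum1dep_card [in RHS]big_mkcondr big_distrr /=.
  apply: eq_bigr => M Mchords; have [f0 f0inj f0M] := chords_of_onto u0 Mchords.
  rewrite (eq_bigr (fun=> nat_of_bool (act_chords g M == M))); last first.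
    by move=> f /andP[_ /eqP ->].
  rewrite sum_nat_const -f0M -(card_labellings f0inj) cardsE.
  by case: (_ == _); rewrite ?muln1 ?muln0.
by move=> f /injectiveP finj; apply: chordset_chords_of.
Qed.

End Labellings.

Section ChordDiagramOrbits.
Variable m : nat.

Lemma act_chordsE (g : {perm 'I_m}) M : act_chords g M = ('P^*)^*%act M g.
Proof. by []. Qed.

Lemma chordset_act_chords (g : {perm 'I_m}) M : is_chordset M -> is_chordset (act_chords g M).
Proof.
case/andP=> Mpart /forall_inP M2; apply/andP; split.
  have -> : [set: 'I_m] = (fun x => g x) @: [set: 'I_m].
    by apply/setP=> y; rewrite inE; apply/esym/imsetP; exists ((g^-1)%g y); rewrite ?inE ?permKV.
  by rewrite /act_chords imset_partition //; apply: perm_inj.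
by apply/forall_inP=> _ /imsetP[B BM ->]; rewrite card_imset ?M2 //; apply: perm_inj.
Qed.

Lemma sum_card_fixed_chordsets (G : {group {perm 'I_m}}) :
  \sum_(g in G) #|[set M in chordsets m | act_chords g M == M]| = num_classes G * #|G|.
Proof.
have G_acts : [acts G, on chordsets m | ('P^*)^*].
  apply/actsP=> g _ M; rewrite !inE; apply/idP/idP; last exact: chordset_act_chords.
  by move/(chordset_act_chords (g^-1)%g); rewrite act_chordsE actK.
have -> : num_classes G = #|orbit ('P^*)^* G @: chordsets m|.
  congr #|pred_of_set _|; apply: eq_in_imset => M MC; apply/setP=> M'.
  rewrite in_set; apply/andP/orbitP => [[_ /exists_inP[g gG /eqP <-]]|[g gG <-]].
    by exists g.
  by rewrite (actsP G_acts) //; split => //; apply/exists_inP; exists g.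
rewrite -(Frobenius_Cauchy G_acts); apply: eq_bigr => g _.
by apply: eq_card => M; rewrite !inE sub1set inE.
Qed.

End ChordDiagramOrbits.

Lemma sum_wreath_cycle_products n (G : {group {perm 'I_(2 * n)}}) : 0 < n ->
  \sum_(pi in wreath n) \sum_(eta in G)
     \prod_(1 <= i < (2 * n).+1 | 0 < cyc pi i) (i ^ cyc pi i * cyc eta i ^_ cyc pi i) =
  #|wreath n| * #|G| * num_classes G.
Proof.
move=> n_gt0; have u0 : 'I_(2 * n) by exists 0; rewrite muln_gt0.
have labels_le : #|{: 'I_n * 'I_2}| <= 2 * n by rewrite card_labels card_ord.
under eq_bigr => pi _ do under eq_bigr => eta _ do
  rewrite -(card_eqv_inj pi eta u0 labels_le).
rewrite exchange_big /=.
under eq_bigr => eta _ do rewrite sum_card_eqv_inj_wreath (sum_fixed_labellings u0).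
by rewrite -big_distrr /= sum_card_fixed_chordsets [num_classes G * _]mulnC mulnA.
Qed.

Unset Implicit Arguments.
Import GRing.Theory Num.Theory.
Local Open Scope ring_scope.

Theorem theorem1 (n : nat) (G : {group {perm 'I_(2 * n)}}) :
  (1 <= n)%N ->
  (forall g, g \in G -> circ_aut g) ->
  (num_classes G)%:R =
    ((#|wreath n| * #|G|)%:R)^-1 *
    (\sum_(pi in wreath n) \sum_(eta in G)
       \prod_(1 <= i < (2 * n).+1 | (0 < cyc pi i)%N)
          (i ^ cyc pi i * (cyc eta i) ^_ (cyc pi i))%N)%:R :> rat.
Proof.
move=> n_gt0 _; rewrite sum_wreath_cycle_products // [(_ * num_classes G)%:R]natrM mulKf //.
by rewrite pnatr_eq0 muln_eq0 negb_or -!lt0n card_wreath_gt0 cardG_gt0.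
Qed.
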